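(* Let $\vec{k}=(k_1,\dots,k_n)$ be a vector of positive integers, let $\mathcal{K}$ be the set of all vectors obtained by permuting the entries of $\vec{k}$, and let $\mathcal{D}_{\mathcal{K}}=\bigcup_{\vec{k}'\in\mathcal{K}}\mathcal{D}_{\vec{k}'}$. For every $\overline{D}\in\mathcal{D}_{\mathcal{K}}$, with sweep map image $D=\Phi(\overline{D})$, we have $$\operatorname{dinv}(\overline{D})=\operatorname{area}(D)\qquad\text{and}\qquad \operatorname{area}(\overline{D})=\operatorname{bounce}(D).$$
   Context: For a vector $\vec{k}=(k_1,\dots,k_n)$ of positive integers put $|\vec{k}|=\sum_i k_i$. A $\vec{k}$-Dyck path is a word $D=\sigma_1\sigma_2\cdots\sigma_N$, $N=|\vec{k}|+n$, consisting of $n$ ''red arrows'' (north/up steps) and $|\vec{k}|$ ''blue arrows'' $W$ (east/down steps), where the $j$-th red arrow from the left is $S^{k_j}$, of length $\ell(S^{k_j})=k_j$; a red arrow $S^{k_j}$ has value $k_j$ and each $W$ has value $-1$. Define ranks $r_1=0$ and $r_{m+1}=r_m+(\text{value of }\sigma_m)$; it is required that $r_m\ge 0$ for all $m$ (then $r_{N+1}=0$). The starting rank of the step $\sigma_m$ is $r(\sigma_m)=r_m$ and its end rank is $\dot r(\sigma_m)=r_{m+1}$. Geometrically (model 3), $D$ is the lattice path from $(0,0)$ to $(N,0)$ never below the horizontal axis, with up steps $(1,k_j)$ and down steps $(1,-1)$, and ranks are the $y$-coordinates of starting points. Equivalently (model 1), $D$ is a lattice path from $(0,0)$ to $(|\vec{k}|,|\vec{k}|)$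 never below $y=x$, with north steps of lengths $k_1,\dots,k_n$ (bottom to top) and unit east steps; the rank of a vertex is $y-x$. Let $\mathcal{D}_{\vec{k}}$ be the set of $\vec{k}$-Dyck paths. For steps $A,B$ of $D$, write $A<B$ if $A$ is to the left of $B$, and $A<^sB$ (sweep order) if $r(A)<r(B)$, or $r(A)=r(B)$ and $B<A$. Sweep map: $\Phi(\overline{D})$ is the word obtained by listing the steps of $\overline{D}$ in increasing sweep order (bottom to top by starting rank, right to left at equal rank). For $\overline{D}\in\mathcal{D}_{\vec{k}}$, $\Phi(\overline{D})$ is a $\vec{k}'$-Dyck path for some rearrangement $\vec{k}'$ of $\vec{k}$, and $\Phi$ is a bijection of $\mathcal{D}_{\mathcal{K}}$ to itself. Area: $\operatorname{area}(D)=\sum_{S} r(S)$, summed over all red arrows $S$ of $D$. Dinv: $\operatorname{dinv}(D)$ is the sum of two parts. (1) Sweep dinv: the number of pairs $(W,S)$ with $W$ a blue arrow, $S$ a red arrow, $W<S$, such that $W$ sweeps $S$, i.e. $W$ intersects $S$ when $W$ is moved to the right past $S$ along a line of slope $\epsilon$, $0<\epsilon\ll1$; equivalently $r(S)\le r(W)\le \dot r(S)$. (2) Red dinv: $\sum_{S_i<S_j}\chi\big(r(S_i)\ge r(S_j)\ \&\ \dot r(S_j)>\dot r(S_i)\big)(\dot r(S_j)-\dot r(S_i))+\sum_{S_i<S_j}\chi\big(r(S_i)<r(S_j)\ \&\ \dot r(S_j)<\dot r(S_i)\big)(\dot r(S_i)-\dot r(S_j))$, over pairs of red arrows. Bounce: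 let $D$ be a $\vec{k}'$-Dyck path with red arrow lengths $k'_1,\dots,k'_n$ (left to right), $|\vec{k}'|=K$. For $0\le x<K$ let $N(x)$ be the number of red arrows preceding the $(x+1)$-st letter $W$ of $D$ (in model 1: the number of north steps before the unique east step starting at abscissa $x$). Build a tableau with $n$ columns, column $j$ having $k'_j+1$ cells whose entries are $t_j,t_j+1,\dots,t_j+k'_j$ from top to bottom, where the top entries $t_j$ are assigned as follows. Set $x_0=0$, $v_0=N(0)$, and give top entry $0$ to columns $1,\dots,v_0$. Recursively, for $i\ge0$, let $h_i$ be the number of cells with entry $i+1$ among the columns filled so far and $x_{i+1}=x_i+h_i$; if $x_{i+1}=K$, stop; otherwise let $v_{i+1}=N(x_{i+1})-N(x_i)$ and give top entry $i+1$ to columns $N(x_i)+1,\dots,N(x_{i+1})$. Then $\operatorname{bounce}(D)=\sum_{i\ge0} i\,v_i$, the sum of the top entries. *)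

From HB Require Import structures.
From mathcomp Require Import all_boot all_order all_algebra.
Set Implicit Arguments. Unset Strict Implicit. Unset Printing Implicit Defensive.
Import Order.TTheory GRing.Theory Num.Theory.
Local Open Scope ring_scope.

(* A letter of a (k-)Dyck word: a red arrow S^k (north/up step of length k,
   value k) or a blue arrow W (east/down step, value -1). *)
Inductive step : Type := Red of nat | Blue.

Definition is_red (s : step) : bool := if s is Red _ then true else false.
Definition len (s : step) : nat := if s is Red k then k else 0%N.
Definition value (s : step) : int := if s is Red k then k%:Z else -1.

Definition red_lengths (D : seq step) : seq nat :=
  [seq len s | s <- D & is_red s].

(* rank D m = r_{m+1}: starting rank of the letter at (0-based) position m,
   i.e. the sum of the values of the first m letters.  The end rank of the
   letter at position m is rank D m.+1. *)
Definition rank (D : seq step) (m : nat) : int :=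
  \sum_(s <- take m D) value s.

Definition kDyck (kv : seq nat) (D : seq step) : bool :=
  [&& red_lengths D == kv,
      count (fun s => ~~ is_red s) D == sumn kv &
      all (fun m => 0 <= rank D m) (iota 0 (size D).+1)].

Definition in_DK (kv : seq nat) (D : seq step) : Prop :=
  exists kv' : seq nat, perm_eq kv kv' /\ kDyck kv' D.

Definition sweep_le (D : seq step) (i j : nat) : bool :=
  (rank D i < rank D j) || ((rank D i == rank D j) && (j <= i)%N).

Definition sweep (D : seq step) : seq step :=
  [seq nth Blue D i | i <- sort (sweep_le D) (iota 0 (size D))].

Definition area (D : seq step) : int :=
  \sum_(m < size D | is_red (nth Blue D m)) rank D m.

Definition sweep_dinv (D : seq step) : nat :=
  \sum_(a < size D) \sum_(b < size D)
     [&& (a < b)%N, ~~ is_red (nth Blue D a), is_red (nth Blue D b),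
         (rank D b <= rank D a)%R & (rank D a <= rank D b.+1)%R].

Definition red_dinv (D : seq step) : int :=
  \sum_(i < size D) \sum_(j < size D)
    (if [&& (i < j)%N, is_red (nth Blue D i) & is_red (nth Blue D j)] then
       (if (rank D j <= rank D i) && (rank D i.+1 < rank D j.+1)
        then rank D j.+1 - rank D i.+1 else 0)
     + (if (rank D i < rank D j) && (rank D j.+1 < rank D i.+1)
        then rank D i.+1 - rank D j.+1 else 0)
     else 0).

Definition dinv (D : seq step) : int := (sweep_dinv D)%:Z + red_dinv D.

Definition blue_pos (D : seq step) : seq nat :=
  [seq i <- iota 0 (size D) | ~~ is_red (nth Blue D i)].

Definition Nb (D : seq step) (x : nat) : nat :=
  count is_red (take (nth 0%N (blue_pos D) x) D).

(* h_i: number of cells with entry i+1 among the filled columns, where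
   column j (0-based) has entries tops_j, ..., tops_j + k'_j. *)
Definition hcells (D : seq step) (i : nat) (tops : seq nat) : nat :=
  \sum_(j < size tops)
     ((nth 0%N tops j <= i.+1)%N && (i.+1 <= nth 0%N tops j + nth 0%N (red_lengths D) j)%N).

(* One iteration: current index i, current x = x_i, current top entries of the
   filled columns 1..N(x_i).  Fuel bounds the number of iterations. *)
Fixpoint bounce_tops (D : seq step) (fuel i x : nat) (tops : seq nat) : seq nat :=
  match fuel with
  | 0%N => tops
  | fuel'.+1 =>
      let x' := (x + hcells D i tops)%N in
      if (sumn (red_lengths D) <= x')%N then tops
      else bounce_tops D fuel' i.+1 x' (tops ++ nseq (Nb D x' - Nb D x) i.+1)
  end.

Definition bounce (D : seq step) : nat :=
  sumn (bounce_tops D (sumn (red_lengths D)).+1 0 0 (nseq (Nb D 0) 0%N)).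

From HB Require Import structures.
From mathcomp Require Import all_boot all_order all_algebra zify.
Import Order.TTheory GRing.Theory Num.Theory.
Set Implicit Arguments. Unset Strict Implicit. Unset Printing Implicit Defensive.

(* In Phi(D) the letter coming from position s of D has as rank the total
   value of the letters preceding s in sweep order.  The blue arrows among
   them are counted level by level: on any stretch of the path, the blue
   arrows starting at height y + 1 are as many as the red arrows crossing from
   height <= y to height > y, up to boundary terms.  This writes area(Phi(D))
   as a sum over pairs of red arrows, and the contributions of (s, t) and
   (t, s) together split into the sweep dinv and red dinv contributions of the
   pair, whence dinv(D) = area(Phi(D)).
   The red arrows of Phi(D) are those of D listed by increasing starting rank.
   By induction on i, x_i is the number of blue arrows of D starting at rank at
   most i and N(x_i) the number of red arrows of D starting at rank at most i,
   so the bounce procedure gives each red arrow of Phi(D) its starting rank in D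
   as top entry; summing these gives area(D). *)

Lemma Posz_sum (I : Type) (r : seq I) (P : pred I) (F : I -> nat) :
  Posz (\sum_(i <- r | P i) F i) = (\sum_(i <- r | P i) Posz (F i))%R.
Proof. exact: (big_morph Posz PoszD). Qed.

Lemma sum_in_range m n a b :
  \sum_(m <= y < n) (a <= y < b) = minn b n - maxn a m.
Proof.
elim: n => [|n IH]; first by rewrite big_geq //; lia.
case: (leqP m n) => hmn; last by rewrite big_geq //; lia.
rewrite big_nat_recr //= IH.
by case: (leqP a n); case: (ltnP n b) => /=; lia.
Qed.

Lemma sum_ltn m n h : \sum_(m <= y < n) (y < h) = minn h n - m.
Proof. by rewrite -[m in RHS]max0n -sum_in_range. Qed.

Lemma sum_eq_succ m n x : \sum_(m <= y < n) (x == y.+1) = (m < x <= n).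
Proof.
elim: n => [|n IH]; first by rewrite big_geq //; lia.
case: (leqP m n) => hmn; last by rewrite big_geq //; lia.
rewrite big_nat_recr //= IH.
by case: (eqVneq x n.+1) => [->|ne] /=; lia.
Qed.

Lemma sum_ord_gtn n s (F : nat -> nat) :
  \sum_(j < n) ((s < j) * F j) = \sum_(s.+1 <= j < n) F j.
Proof.
rewrite -(big_mkord xpredT (fun j => (s < j) * F j)).
case: (leqP s.+1 n) => h; last first.
  rewrite [RHS]big_geq ?(ltnW h) // big_nat_cond big1 // => j /andP[/andP[_ hj] _].
  by rewrite ltnNge (leq_trans (ltnW hj)) // -ltnS.
rewrite (big_cat_nat (leq0n s.+1) h) /= big_nat_cond big1 ?add0n.
  by apply: eq_big_nat => j /andP[hj _]; rewrite hj mul1n.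
by move=> j /andP[/andP[_ hj] _]; rewrite ltnNge -ltnS hj.
Qed.

Lemma sum_ord_ltn n b (F : nat -> nat) : b <= n ->
  \sum_(j < n) ((j < b) * F j) = \sum_(0 <= j < b) F j.
Proof.
move=> h; rewrite -(big_mkord xpredT (fun j => (j < b) * F j)).
rewrite (big_cat_nat (leq0n b) h) /= [X in _ + X]big_nat_cond [X in _ + X]big1 ?addn0.
  by apply: eq_big_nat => j /andP[_ hj]; rewrite hj mul1n.
by move=> j /andP[/andP[hj _] _]; rewrite ltnNge hj.
Qed.

Lemma sum_ord_symmetrize n (G H : nat -> nat -> nat) :
  (forall s t, s < n -> t < n -> G s t + G t s = H s t + H t s) ->
  \sum_(s < n) \sum_(t < n) G s t = \sum_(s < n) \sum_(t < n) H s t.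
Proof.
move=> hGH.
have sum_swap_double K : \sum_(s < n) \sum_(t < n) (K s t + K t s) =
    (\sum_(s < n) \sum_(t < n) K s t).*2.
  under eq_bigr do rewrite big_split.
  by rewrite big_split /= [X in _ + X]exchange_big addnn.
apply: double_inj; rewrite -!sum_swap_double.
by apply: eq_bigr => s _; apply: eq_bigr => t _; apply: hGH.
Qed.

Lemma big_iota0_ord (R : Type) (idx : R) (op : Monoid.law idx) n (P : pred nat) (F : nat -> R) :
  \big[op/idx]_(j <- iota 0 n | P j) F j = \big[op/idx]_(j < n | P j) F j.
Proof. by rewrite -big_mkord /index_iota subn0. Qed.

Lemma rank0 D : rank D 0 = 0%R.
Proof. by rewrite /rank take0 big_nil. Qed.

Lemma rankS D m : m < size D -> rank D m.+1 = (rank D m + value (nth Blue D m))%R.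
Proof. by move=> hm; rewrite /rank (take_nth Blue hm) -cats1 big_cat big_seq1. Qed.

Lemma rank_oversize D m : size D <= m -> rank D m = rank D (size D).
Proof. by move=> hm; rewrite /rank take_oversize // take_size. Qed.

Section SweepOrder.
Variable D : seq step.

Definition sweep_index := sort (sweep_le D) (iota 0 (size D)).
Definition sweep_lt i j := sweep_le D i j && (i != j).

Lemma sweep_le_refl : reflexive (sweep_le D).
Proof. by move=> i; rewrite /sweep_le eqxx leqnn orbT. Qed.

Lemma sweep_le_total : total (sweep_le D).
Proof.
move=> i j; rewrite /sweep_le.
by case: (ltrgtP (rank D i) (rank D j)) => //= _; rewrite leq_total.
Qed.

Lemma sweep_le_trans : transitive (sweep_le D).
Proof.
move=> j i k; rewrite /sweep_le.
case/orP=> [h1|/andP[/eqP e1 h1]]; case/orP=> [h2|/andP[/eqP e2 h2]].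
- by rewrite (lt_trans h1 h2).
- by rewrite -e2 h1.
- by rewrite e1 h2.
- by rewrite e1 e2 eqxx (leq_trans h2 h1) orbT.
Qed.

Lemma sweep_le_anti : antisymmetric (sweep_le D).
Proof.
move=> i j; rewrite /sweep_le.
case/andP; case/orP=> [h1|/andP[/eqP e1 h1]]; case/orP=> [h2|/andP[/eqP e2 h2]].
- by move: (lt_trans h1 h2); rewrite ltxx.
- by move: h1; rewrite e2 ltxx.
- by move: h2; rewrite e1 ltxx.
- by apply/eqP; rewrite eqn_leq h1 h2.
Qed.

Lemma perm_sweep_index : perm_eq sweep_index (iota 0 (size D)).
Proof. by rewrite perm_sort perm_refl. Qed.

Lemma sweep_index_uniq : uniq sweep_index.
Proof. by rewrite (perm_uniq perm_sweep_index) iota_uniq. Qed.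

Lemma size_sweep_index : size sweep_index = size D.
Proof. by rewrite size_sort size_iota. Qed.

Lemma mem_sweep_index j : (j \in sweep_index) = (j < size D).
Proof. by rewrite (perm_mem perm_sweep_index) mem_iota. Qed.

Lemma take_sweep_index m : m < size D ->
  perm_eq (take m sweep_index)
          [seq j <- iota 0 (size D) | sweep_lt j (nth 0 sweep_index m)].
Proof.
move=> hm; apply: uniq_perm.
- exact: take_uniq sweep_index_uniq.
- exact: filter_uniq (iota_uniq _ _).
have hs : m < size sweep_index by rewrite size_sweep_index.
have le_nth := sorted_leq_nth sweep_le_trans sweep_le_refl 0
  (sort_sorted sweep_le_total (iota 0 (size D))).
move=> x; rewrite mem_filter mem_iota add0n /sweep_lt; apply/idP/idP.
- move=> hx; have hxs : x \in sweep_index by apply: mem_take hx.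
  have hi : index x sweep_index < m by rewrite -in_take.
  have hiS : index x sweep_index < size sweep_index by rewrite index_mem.
  rewrite -mem_sweep_index hxs andbT -(nth_index 0 hxs).
  rewrite le_nth ?inE ?(ltnW hi) //=.
  by rewrite nth_uniq ?sweep_index_uniq // neq_ltn hi.
- case/andP=> /andP[hle hne] hxN.
  have hxs : x \in sweep_index by rewrite mem_sweep_index.
  have hiS : index x sweep_index < size sweep_index by rewrite index_mem.
  rewrite in_take // ltnNge; apply/negP => hmi.
  have := le_nth m (index x sweep_index) hs hiS hmi; rewrite nth_index // => hge.
  by move: hne; rewrite (@sweep_le_anti x (nth 0 sweep_index m)) ?hle ?hge ?eqxx.
Qed.

Lemma big_take_sweep_index (R : Type) (idx : R) (op : Monoid.com_law idx) m (F : nat -> R) :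
  m < size D ->
  \big[op/idx]_(j <- take m sweep_index) F j =
  \big[op/idx]_(j < size D | sweep_lt j (nth 0 sweep_index m)) F j.
Proof. by move=> hm; rewrite (perm_big _ (take_sweep_index hm)) big_filter big_iota0_ord. Qed.

Lemma size_sweep : size (sweep D) = size D.
Proof. by rewrite size_map size_sweep_index. Qed.

Lemma nth_sweep m : m < size D ->
  nth Blue (sweep D) m = nth Blue D (nth 0 sweep_index m).
Proof. by move=> hm; rewrite (nth_map 0) // size_sweep_index. Qed.

Lemma rank_sweep m : m < size D ->
  rank (sweep D) m =
  (\sum_(j < size D | sweep_lt j (nth 0 sweep_index m)) value (nth Blue D j))%R.
Proof. by move=> hm; rewrite /rank /sweep -/sweep_index -map_take big_map big_take_sweep_index. Qed.

Lemma count_take_sweep (a : pred step) m : m < size D ->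
  count a (take m (sweep D)) =
  \sum_(j < size D | sweep_lt j (nth 0 sweep_index m)) a (nth Blue D j).
Proof.
move=> hm; rewrite /sweep -/sweep_index -map_take count_map -sum1_count big_mkcond /=.
rewrite (eq_bigr (fun j => nat_of_bool (a (nth Blue D j)))); last by move=> j _; case: (a _).
exact: big_take_sweep_index.
Qed.

Lemma area_sweep : area (sweep D) =
  (\sum_(s < size D | is_red (nth Blue D s))
     \sum_(j < size D | sweep_lt j s) value (nth Blue D j))%R.
Proof.
pose F s := (\sum_(j < size D | sweep_lt j s) value (nth Blue D j))%R.
rewrite -(big_iota0_ord _ _ (fun s => is_red (nth Blue D s)) F) /=.
rewrite -(perm_big _ perm_sweep_index) (big_nth 0) size_sweep_index.
rewrite big_mkord /area size_sweep.
by apply: eq_big => m; rewrite nth_sweep // => _; rewrite rank_sweep.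
Qed.

End SweepOrder.

Section SortedByKey.
Variables (T : eqType) (key : T -> nat).
Local Notation le_key := (relpre key leq).

Lemma le_key_trans : transitive le_key.
Proof. by move=> y x z; apply: leq_trans. Qed.

Lemma filter_key_le_take (L : seq T) i : sorted le_key L ->
  [seq p <- L | key p <= i] = take (count (fun p => key p <= i) L) L.
Proof.
elim: L => [|p L IH] //= hs.
case: leqP => hp /=; first by rewrite IH // (path_sorted hs).
have /allP hall := order_path_min le_key_trans hs.
have gt_i q : q \in L -> (key q <= i) = false.
  by move=> hq; apply/negbTE; rewrite -ltnNge (leq_trans hp (hall q hq)).
by rewrite (eq_in_filter gt_i) (eq_in_count gt_i) filter_pred0 count_pred0 take0.
Qed.

Lemma filter_key_le_succ (L : seq T) i : sorted le_key L ->
  [seq p <- L | key p <= i.+1] =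
  [seq p <- L | key p <= i] ++ [seq p <- L | key p == i.+1].
Proof.
elim: L => [|p L IH] //= hs.
have /allP hall := order_path_min le_key_trans hs.
have none (a : pred T) : (forall q, key p <= key q -> a q = false) -> [seq q <- L | a q] = [::].
  by move=> ha; rewrite (eq_in_filter (a2 := pred0)) ?filter_pred0 // => q /hall /ha.
case: (ltngtP (key p) i.+1) => hp /=.
- by rewrite -ltnS hp IH // (path_sorted hs).
- rewrite leqNgt (ltn_trans (ltnSn i) hp) /= !none // => q hq.
  + by rewrite eqn_leq leqNgt (leq_trans hp hq).
  + by rewrite leqNgt (ltn_trans (ltnSn i) (leq_trans hp hq)).
  + by rewrite leqNgt (leq_trans hp hq).
- rewrite ?hp ?ltnn ?eqxx /= [X in _ = X ++ _]none => [|q]; last first.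
    by rewrite hp => hq; apply/negbTE; rewrite -ltnNge.
  congr (_ :: _); apply: eq_in_filter => q /hall; rewrite /= hp => hq.
  by rewrite eqn_leq hq andbT.
Qed.

Lemma map_key_filter_eq (L : seq T) a :
  map key [seq p <- L | key p == a] = nseq (count (fun p => key p == a) L) a.
Proof. by elim: L => [|p L IH] //=; case: eqP => [e|_] /=; rewrite IH ?e. Qed.

End SortedByKey.

Lemma nth_blue_pos (E : seq step) m : m < size E -> ~~ is_red (nth Blue E m) ->
  nth 0 (blue_pos E) (count (fun s => ~~ is_red s) (take m E)) = m.
Proof.
move=> hm hb; rewrite /blue_pos.
have -> : iota 0 (size E) = iota 0 m ++ m :: iota m.+1 (size E - m.+1).
  by rewrite -{1}(subnKC (ltnW hm)) iotaD add0n -(subnSK hm).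
rewrite filter_cat nth_cat size_filter -(map_nth_iota0 Blue (ltnW hm)) count_map.
by rewrite ltnn subnn /= hb.
Qed.

Lemma hcells_take (E : seq step) i (M : seq (nat * nat)) c :
  red_lengths E = map snd M -> c <= size M ->
  hcells E i (map fst (take c M)) =
  count (fun p : nat * nat => (p.1 <= i.+1) && (i.+1 <= p.1 + p.2)) (take c M).
Proof.
move=> hE hc; rewrite /hcells size_map size_takel // hE.
rewrite -sum1_count (big_nth (0, 0)) size_takel // big_mkord [RHS]big_mkcond /=.
apply: eq_bigr => j _; have hj := leq_trans (ltn_ord j) hc.
by rewrite (nth_map (0, 0)) ?size_takel // (nth_map (0, 0)) // nth_take.
Qed.

Definition red (D : seq step) i := is_red (nth Blue D i).
Definition height (D : seq step) m : nat := absz (rank D m).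

(* Quantities attached to red arrows s, t at positions s, t of a path, with
   rank intervals [a, a'] and [c, c'].  [rise_before] is the rise of t counted
   in the rank of s in the sweep image.  [blue_before_share] is the number of
   blue arrows preceding s in sweep order that are charged to t: a blue arrow
   starting at rank y + 1 is charged to a red arrow crossing level y, and when
   a > 0 one further blue arrow starting at rank a is left uncharged.
   [sweep_dinv_share] and [red_dinv_term] are the contributions of the pair to
   the sweep dinv of s and to the red dinv. *)
Definition rise_before (s t a a' c c' : nat) :=
  (c' - c) * ((c < a) + ((s < t) && (c == a))).

Definition blue_before_share (s t a c c' : nat) :=
  (minn c' a.-1 - c) + (0 < a) * ((s < t) && (c <= a.-1 < c')).

Definition sweep_dinv_share (s t a a' c c' : nat) :=
  (t < s) * (minn c' a' - maxn c a.-1).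

Definition red_dinv_term (s t a a' c c' : nat) :=
  (s < t) * (((c <= a) && (a' < c')) * (c' - a') + ((a < c) && (c' < a')) * (a' - c')).

Definition pair_share (s t a a' c c' : nat) :=
  blue_before_share s t a c c' + sweep_dinv_share s t a a' c c' + red_dinv_term s t a a' c c'.

Lemma pair_share_balance s t a a' c c' : s < t -> a < a' -> c < c' ->
  rise_before s t a a' c c' + rise_before t s c c' a a' =
  pair_share s t a a' c c' + pair_share t s c c' a a'.
Proof.
rewrite /rise_before /pair_share /blue_before_share /sweep_dinv_share /red_dinv_term.
move=> hst h1 h2; rewrite hst (ltnNge t s) (ltnW hst) /=.
case: (ltngtP a c) => hac; case: (ltngtP a' c') => h3; case: (posnP a) => h4;
 case: (boolP (c <= a.-1 < c')) => h5; rewrite /= ?mul1n ?mul0n ?muln1 ?muln0 ?addn0 ?add0n.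
all: lia.
Qed.

Section DyckPath.
Variable D : seq step.
Local Notation N := (size D).
Local Notation r := (height D).
Local Notation rd := (red D).
Hypothesis rank_ge0 : forall m, (0 <= rank D m)%R.
Hypothesis rank_size : rank D N = 0%R.
Hypothesis len_red_gt0 : forall i, i < N -> rd i -> 0 < len (nth Blue D i).

Lemma heightE m : Posz (r m) = rank D m.
Proof. by rewrite /height abszE ger0_norm. Qed.

Lemma height0 : r 0 = 0.
Proof. by rewrite /height rank0. Qed.

Lemma height_size : r N = 0.
Proof. by rewrite /height rank_size. Qed.

Lemma height_red i : i < N -> rd i -> r i.+1 = r i + len (nth Blue D i).
Proof.
move=> hi; rewrite /red; case E: (nth Blue D i) => [k|] //= _.
by apply/eqP; rewrite -eqz_nat PoszD !heightE rankS // E.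
Qed.

Lemma height_blue i : i < N -> ~~ rd i -> r i = (r i.+1).+1.
Proof.
move=> hi; rewrite /red; case E: (nth Blue D i) => [k|] //= _.
apply/eqP; rewrite -eqz_nat -addn1 PoszD !heightE rankS // E /=.
by rewrite -addrA addNr addr0.
Qed.

Lemma height_red_lt i : i < N -> rd i -> r i < r i.+1.
Proof. by move=> hi hr; rewrite (height_red hi hr) -{1}[r i]addn0 ltn_add2l len_red_gt0. Qed.

Lemma height_blue_gt0 i : i < N -> ~~ rd i -> 0 < r i.
Proof. by move=> hi hb; rewrite (height_blue hi hb). Qed.

(* Between positions p and q, the path crosses the line at height y + 1/2
   upwards once per red arrow and downwards once per blue arrow starting at
   height y + 1; the indicators [y < r _] account for the side of the line the
   endpoints lie on. *)
Lemma crossing_balance p q y : p <= q <= N ->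
  \sum_(p <= i < q) (rd i && (r i <= y < r i.+1)) + (y < r p) =
  \sum_(p <= i < q) (~~ rd i && (r i == y.+1)) + (y < r q).
Proof.
case/andP; elim: q => [|q IH] hpq hqN.
  by move: hpq; rewrite leqn0 => /eqP ->; rewrite !big_geq.
case: (ltngtP p q.+1) hpq => // [hpq|<-] _; last by rewrite !big_geq.
rewrite !big_nat_recr //=.
have {IH} := IH hpq (ltnW hqN).
case hr: (rd q) => /=.
  rewrite (height_red hqN hr).
  by case: (leqP (r q) y) => /=; case: (ltnP y (r q + len (nth Blue D q))) => /=; lia.
rewrite (height_blue hqN (negbT hr)) eqSS.
case: (eqVneq (r q.+1) y) => [->|ne] /=; first by rewrite ltnSn ltnn; lia.
by move: ne; rewrite ltnS; lia.
Qed.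

Lemma crossing_balance_full y :
  \sum_(j < N) (~~ rd j && (r j == y.+1)) = \sum_(t < N) (rd t && (r t <= y < r t.+1)).
Proof.
have := @crossing_balance 0 N y; rewrite leq0n leqnn height0 height_size !addn0.
by rewrite !big_mkord => /(_ isT) ->.
Qed.

Lemma exists_blue_down p y : p <= N -> y < r p ->
  exists j, [/\ p <= j, j < N, ~~ rd j & r j = y.+1].
Proof.
move=> hp hy.
have := @crossing_balance p N y; rewrite hp leqnn height_size hy addn0 => /(_ isT) E.
have : has (fun j => ~~ rd j && (r j == y.+1)) (index_iota p N).
  apply/negPn/negP => /hasPn H.
  move: E; rewrite [X in _ = X]big_seq [X in _ = X]big1 ?addn1 //.
  by move=> j hj; rewrite (negbTE (H j hj)).
case/hasP => j; rewrite mem_index_iota => /andP[h1 h2] /andP[h3 /eqP h4].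
by exists j.
Qed.

Lemma sweep_ltE j s : sweep_lt D j s = (r j < r s) || ((s < j) && (r j == r s)).
Proof.
rewrite /sweep_lt /sweep_le -!heightE ltz_nat eqz_nat.
case: (ltngtP (r j) (r s)) => //= h.
- by apply/eqP => E; move: h; rewrite E ltnn.
- by rewrite andbF.
- by rewrite andbT ltn_neqAle eq_sym andbC.
Qed.

Lemma sum_sweep_lt (b : nat -> bool) s : \sum_(j < N) (sweep_lt D j s && b j) =
  \sum_(j < N) (b j && (r j < r s)) + \sum_(s.+1 <= j < N) (b j && (r j == r s)).
Proof.
rewrite -sum_ord_gtn -big_split; apply: eq_bigr => j _; rewrite sweep_ltE.
by case: (ltngtP (r j) (r s)); case: (s < j); case: (b j).
Qed.

Definition red_pair (f : nat -> nat -> nat -> nat -> nat -> nat -> nat) s t :=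
  rd s * (rd t * f s t (r s) (r s.+1) (r t) (r t.+1)).

Definition red_pair_sum f := \sum_(s < N) \sum_(t < N) red_pair f s t.

Lemma red_pair_sum_balance : red_pair_sum rise_before = red_pair_sum pair_share.
Proof.
apply: sum_ord_symmetrize => s t hs ht; rewrite /red_pair.
case hrs: (rd s); last by rewrite /= !mul0n !muln0.
case hrt: (rd t); last by rewrite /= !mul0n !muln0.
rewrite !mul1n.
have h1 := height_red_lt hs hrs; have h2 := height_red_lt ht hrt.
case: (ltngtP s t) => [hst|hst|<-].
- exact: pair_share_balance.
- by rewrite addnC [RHS]addnC pair_share_balance.
- rewrite /rise_before /pair_share /blue_before_share /sweep_dinv_share /red_dinv_term.
  by rewrite ltnn /=; lia.
Qed.

Lemma count_blue_below h : \sum_(j < N) (~~ rd j && (r j < h)) =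
  \sum_(t < N) rd t * (minn (r t.+1) h.-1 - r t).
Proof.
transitivity (\sum_(j < N) \sum_(0 <= y < h.-1) (~~ rd j && (r j == y.+1))).
  apply: eq_bigr => j _; case hb: (rd j) => /=; first by rewrite big1.
  have hp := height_blue_gt0 (ltn_ord j) (negbT hb).
  by rewrite sum_eq_succ hp /=; case: h => [|h] //=; rewrite leqNgt hp.
rewrite exchange_big /=.
under eq_bigr do rewrite crossing_balance_full //.
rewrite exchange_big /=; apply: eq_bigr => t _.
case: (rd t) => /=; last by rewrite big1.
by rewrite mul1n sum_in_range maxn0.
Qed.

Lemma count_blue_level_after s : s < N -> rd s ->
  \sum_(s.+1 <= j < N) (~~ rd j && (r j == r s)) =
  (0 < r s) * (1 + \sum_(s.+1 <= t < N) (rd t && (r t <= (r s).-1 < r t.+1))).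
Proof.
move=> hs hr; case E: (r s) => [|h] /=.
  rewrite big_nat_cond big1 // => j /andP[/andP[_ hj] _].
  by case hb: (rd j) => //=; rewrite eqn0Ngt height_blue_gt0 ?hb.
have := @crossing_balance s.+1 N h; rewrite hs leqnn height_size addn0 => /(_ isT).
rewrite (height_red hs hr) E.
have -> : h < h.+1 + len (nth Blue D s) by lia.
by move=> <-; lia.
Qed.

Lemma count_blue_swept b : b < N -> rd b ->
  \sum_(0 <= a < b) (~~ rd a && (r b <= r a <= r b.+1)) + (0 < r b) =
  \sum_(0 <= t < b) rd t * (minn (r t.+1) (r b.+1) - maxn (r t) (r b).-1).
Proof.
move=> hb hr; have hlt := height_red_lt hb hr.
transitivity (\sum_(0 <= a < b) \sum_((r b).-1 <= y < r b.+1) (~~ rd a && (r a == y.+1))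
   + \sum_((r b).-1 <= y < r b.+1) (y < r b)).
  congr (_ + _); last by rewrite sum_ltn; lia.
  rewrite big_nat_cond [RHS]big_nat_cond; apply: eq_bigr => a /andP[/andP[_ ha] _].
  case hbl: (rd a) => /=; first by rewrite big1.
  have hp := height_blue_gt0 (ltn_trans ha hb) (negbT hbl).
  by rewrite sum_eq_succ; case: (r b) => [|h] //=; rewrite hp.
rewrite exchange_big /= -big_split /=.
transitivity (\sum_((r b).-1 <= y < r b.+1) \sum_(0 <= t < b) (rd t && (r t <= y < r t.+1))).
  apply: eq_bigr => y _.
  have := @crossing_balance 0 b y; rewrite leq0n (ltnW hb) height0 => /(_ isT).
  by rewrite addn0 => ->.
rewrite exchange_big /=; apply: eq_bigr => t _.
case: (rd t) => /=; last by rewrite big1.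
by rewrite mul1n sum_in_range.
Qed.

Lemma sum_sweep_lt_rise s :
  \sum_(j < N) sweep_lt D j s * (rd j * (r j.+1 - r j)) =
  \sum_(t < N) rd t * rise_before s t (r s) (r s.+1) (r t) (r t.+1).
Proof.
apply: eq_bigr => j _; rewrite sweep_ltE /rise_before.
case: (ltngtP (r j) (r s)) => h /=; case: (s < j) => /=;
  rewrite ?mul1n ?muln1 ?mul0n ?muln0 ?addn0 ?add0n ?orbT ?orbF //; lia.
Qed.

Lemma sum_value_sweep_lt s :
  (\sum_(j < N | sweep_lt D j s) value (nth Blue D j) =
   Posz (\sum_(j < N) sweep_lt D j s * (rd j * (r j.+1 - r j)))
   - Posz (\sum_(j < N) (sweep_lt D j s && ~~ rd j)))%R.
Proof.
rewrite !Posz_sum -sumrB big_mkcond /=; apply: eq_bigr => j _.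
case: (sweep_lt D j s) => /=; last by rewrite mul0n subrr.
have := @height_red j (ltn_ord j); rewrite /red; case: (nth Blue D j) => [k|] /= hj.
  by rewrite hj // !mul1n addKn subr0.
by rewrite mul0n sub0r.
Qed.

Lemma rank_sweep_red s : s < N -> rd s ->
  (\sum_(j < N | sweep_lt D j s) value (nth Blue D j) + Posz (0 < r s)
   + Posz (\sum_(t < N) rd t * blue_before_share s t (r s) (r t) (r t.+1))
  = Posz (\sum_(t < N) rd t * rise_before s t (r s) (r s.+1) (r t) (r t.+1)))%R.
Proof.
move=> hs hr.
have -> : \sum_(t < N) rd t * blue_before_share s t (r s) (r t) (r t.+1) =
    \sum_(t < N) rd t * (minn (r t.+1) (r s).-1 - r t)
    + (0 < r s) * \sum_(s.+1 <= t < N) (rd t && (r t <= (r s).-1 < r t.+1)).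
  rewrite -sum_ord_gtn big_distrr -big_split /=; apply: eq_bigr => t _.
  rewrite /blue_before_share.
  by case: (rd t); case: (0 < r s); case: (s < t); rewrite /= ?mul1n ?mul0n ?muln0 ?addn0.
rewrite sum_value_sweep_lt -sum_sweep_lt_rise (sum_sweep_lt (fun j => ~~ rd j)) -count_blue_below.
rewrite (count_blue_level_after hs hr).
by case: (0 < r s); rewrite /= ?mul1n ?mul0n ?addn0; lia.
Qed.

Lemma sweep_dinv_pairs :
  sweep_dinv D + \sum_(s < N) rd s * (0 < r s) = red_pair_sum sweep_dinv_share.
Proof.
rewrite /sweep_dinv exchange_big -big_split; apply: eq_bigr => b _ /=.
have hb := ltn_ord b; rewrite /red_pair.
case hr: (rd b); last first.
  by rewrite /= big1 => [|a _]; rewrite ?big1 // /red -/(red D b) hr !andbF.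
rewrite /= mul1n /sweep_dinv_share; under [RHS]eq_bigr do rewrite mul1n mulnCA.
rewrite (sum_ord_ltn (fun t => rd t * (minn (r t.+1) (r b.+1) - maxn (r t) (r b).-1)) (ltnW hb)).
rewrite -count_blue_swept // -(sum_ord_ltn _ (ltnW hb)).
congr (_ + _); apply: eq_bigr => a _.
have hrb : is_red (nth Blue D b) := hr.
rewrite hrb -!heightE !lez_nat.
by case: (a < b); rewrite /= ?mul1n.
Qed.

Lemma red_dinv_pairs : red_dinv D = Posz (red_pair_sum red_dinv_term).
Proof.
rewrite /red_dinv Posz_sum; apply: eq_bigr => s _; rewrite Posz_sum; apply: eq_bigr => t _.
rewrite -!heightE !lez_nat !ltz_nat /red_pair /red_dinv_term /red.
case: (s < t); case: (is_red (nth Blue D s)); case: (is_red (nth Blue D t));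
  rewrite /= ?mul0n ?muln0 //.
by case: ifP => h1; case: ifP => h2;
  rewrite ?h1 ?h2 /= ?mul1n ?mul0n ?addn0 ?add0n ?addr0 ?add0r //; lia.
Qed.

Lemma area_sweep_pairs :
  (area (sweep D) + Posz (\sum_(s < N) rd s * (0 < r s))
   + Posz (red_pair_sum (fun s t a _ c c' => blue_before_share s t a c c'))
  = Posz (red_pair_sum rise_before))%R.
Proof.
rewrite area_sweep big_mkcond !Posz_sum -!big_split; apply: eq_bigr => s _ /=.
rewrite /red_pair -!big_distrr /=.
case hr: (is_red (nth Blue D s)); last by rewrite /red hr !mul0n !addr0.
by rewrite /red hr !mul1n -rank_sweep_red.
Qed.

Lemma dinv_eq_area_sweep : dinv D = area (sweep D).
Proof.
have split_share : red_pair_sum pair_share =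
    red_pair_sum (fun s t a _ c c' => blue_before_share s t a c c')
    + red_pair_sum sweep_dinv_share + red_pair_sum red_dinv_term.
  rewrite /red_pair_sum -!big_split; apply: eq_bigr => s _; rewrite -!big_split.
  by apply: eq_bigr => t _; rewrite /red_pair /pair_share !mulnDr.
have := area_sweep_pairs; rewrite red_pair_sum_balance split_share -sweep_dinv_pairs.
by rewrite /dinv red_dinv_pairs !PoszD; lia.
Qed.

Local Notation K := (count (fun s => ~~ is_red s) D).

Lemma count_blue_sum : K = \sum_(j < N) ~~ rd j.
Proof.
rewrite -sum1_count (big_nth Blue) big_mkcond big_mkord.
by apply: eq_bigr => j _; rewrite /red; case: (is_red _).
Qed.

Lemma height_prefix m : m <= N ->
  r m + \sum_(0 <= j < m) ~~ rd j = \sum_(0 <= j < m) rd j * len (nth Blue D j).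
Proof.
elim: m => [|m IH] hm; first by rewrite !big_geq // height0.
rewrite !big_nat_recr //= -(IH (ltnW hm)).
case hr: (rd m); first by rewrite (height_red hm hr) /=; lia.
by rewrite (height_blue hm (negbT hr)) /=; lia.
Qed.

Lemma sum_len_red : \sum_(j < N) rd j * len (nth Blue D j) = K.
Proof.
rewrite -(big_mkord xpredT (fun j => rd j * len (nth Blue D j))) -height_prefix //.
by rewrite height_size count_blue_sum big_mkord.
Qed.

Lemma height_le_count_blue m : r m <= K.
Proof.
case: (leqP m N) => hm; last by rewrite /height rank_oversize ?(ltnW hm) // rank_size.
rewrite -sum_len_red -(big_mkord xpredT (fun j => rd j * len (nth Blue D j))).
rewrite (big_cat_nat (leq0n m) hm) /= -height_prefix //.
by rewrite -addnA leq_addr.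
Qed.

Lemma height_red_lt_count_blue j : j < N -> rd j -> r j < K.
Proof. by move=> hj hr; apply: leq_trans (height_red_lt hj hr) (height_le_count_blue _). Qed.

Definition blues_upto i := \sum_(j < N) (~~ rd j && (r j <= i)).

Lemma blues_upto0 : blues_upto 0 = 0.
Proof.
rewrite /blues_upto big1 // => j _; case hb: (rd j) => //=.
by rewrite leqNgt height_blue_gt0 ?hb.
Qed.

Lemma blues_uptoS i :
  blues_upto i.+1 = blues_upto i + \sum_(j < N) (~~ rd j && (r j == i.+1)).
Proof.
rewrite /blues_upto -big_split; apply: eq_bigr => j _ /=.
by case: (rd j); case: (ltngtP (r j) i.+1) => h //=; lia.
Qed.

Lemma blues_upto_ltP i :
  blues_upto i < K <-> exists j, [/\ j < N, ~~ rd j & i < r j].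
Proof.
have -> : K = blues_upto i + \sum_(j < N) (~~ rd j && (i < r j)).
  rewrite count_blue_sum -big_split; apply: eq_bigr => j _ /=.
  by case: (rd j); case: leqP.
rewrite -{1}[blues_upto i]addn0 ltn_add2l; split.
  case: (pickP (fun j : 'I_N => ~~ rd j && (i < r j))) => [j /andP[h1 h2] _|h0].
    by exists j.
  by rewrite big1 // => j _; rewrite h0.
case=> j [hj hb hi]; rewrite (bigD1 (Ordinal hj)) //=.
by rewrite hb hi.
Qed.

Lemma last_blue_at_height i : blues_upto i < K ->
  exists tau, [/\ tau < N, ~~ rd tau, r tau = i.+1 &
                  forall j, tau < j < N -> r j != i.+1].
Proof.
case/blues_upto_ltP => j0 [hj0 _ hi0].
have [j1 [_ hj1 hb1 hr1]] := exists_blue_down (ltnW hj0) hi0.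
pose P j := [&& j < N, ~~ rd j & r j == i.+1].
have exP : exists j, P j by exists j1; rewrite /P hj1 hb1 hr1 eqxx.
have ubP j : P j -> j <= N by case/andP=> /ltnW.
case: (ex_maxnP exP ubP) => tau /and3P[htN htb /eqP htr] tau_max.
exists tau; split=> // j /andP[htj hjN]; apply/eqP => hrj.
have hij : i < r j by rewrite hrj.
have [j' [hjj' hj'N hb' hr']] := exists_blue_down (ltnW hjN) hij.
have := tau_max j'; rewrite /P hj'N hb' hr' eqxx => /(_ isT).
by rewrite leqNgt (leq_trans htj hjj').
Qed.

Lemma Nb_sweep_blues_upto i : blues_upto i < K ->
  Nb (sweep D) (blues_upto i) = \sum_(j < N) (rd j && (r j <= i)).
Proof.
case/last_blue_at_height => tau [htN htb htr tau_last].
have hts : tau \in sweep_index D by rewrite mem_sweep_index.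
pose m := index tau (sweep_index D).
have hm : m < N by rewrite -(size_sweep_index D) index_mem.
have htau : nth 0 (sweep_index D) m = tau by rewrite nth_index.
have swept_before (b : nat -> bool) :
    \sum_(j < N | sweep_lt D j tau) b j = \sum_(j < N) (b j && (r j <= i)).
  rewrite big_mkcond (eq_bigr (fun j : 'I_N => nat_of_bool (sweep_lt D j tau && b j))).
    2: by move=> j _; case: (sweep_lt _ _ _).
  rewrite (sum_sweep_lt b) htr [X in _ + X]big_nat_cond [X in _ + X]big1 ?addn0.
    by apply: eq_bigr => j _; rewrite ltnS.
  by move=> j /andP[/andP[h1 h2] _]; rewrite (negbTE (tau_last j _)) ?andbF ?h1.
have blues_before : count (fun s => ~~ is_red s) (take m (sweep D)) = blues_upto i.
  by rewrite count_take_sweep // htau (swept_before (fun j => ~~ rd j)).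
have hbl : ~~ is_red (nth Blue (sweep D) m) by rewrite nth_sweep // htau.
rewrite /Nb -blues_before nth_blue_pos ?size_sweep //.
by rewrite count_take_sweep // htau (swept_before rd).
Qed.

Definition sweep_red_arrows :=
  [seq (r j, len (nth Blue D j)) | j <- [seq j <- sweep_index D | rd j]].

Definition tops_upto i := map fst [seq p <- sweep_red_arrows | p.1 <= i].

Lemma sweep_red_arrows_sorted : sorted (relpre fst leq) sweep_red_arrows.
Proof.
rewrite sorted_map; apply: sub_sorted
  (sorted_filter (@sweep_le_trans D) _ (sort_sorted (@sweep_le_total D) _)).
move=> p q; rewrite /relpre /= /sweep_le -!heightE ltz_nat eqz_nat.
by case/orP => [/ltnW //|/andP[/eqP -> _]].
Qed.

Lemma red_lengths_sweep : red_lengths (sweep D) = map snd sweep_red_arrows.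
Proof. by rewrite /red_lengths /sweep filter_map -!map_comp. Qed.

Lemma count_sweep_red_arrows (a : pred (nat * nat)) :
  count a sweep_red_arrows = \sum_(j < N) (rd j && a (r j, len (nth Blue D j))).
Proof.
have /permP hp := perm_filter rd (perm_sweep_index D).
rewrite /sweep_red_arrows count_map hp count_filter -sum1_count big_mkcond /= big_iota0_ord.
by apply: eq_bigr => j _; rewrite /preim /predI /= andbC; case: (_ && _).
Qed.

Lemma sumn_red_lengths_sweep : sumn (red_lengths (sweep D)) = K.
Proof.
rewrite red_lengths_sweep /sweep_red_arrows -map_comp sumnE big_map big_filter.
rewrite (perm_big _ (perm_sweep_index D)) big_iota0_ord big_mkcond -sum_len_red /=.
by apply: eq_bigr => j _; case: (rd j); rewrite ?mul1n.
Qed.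

Lemma hcells_tops_upto i :
  hcells (sweep D) i (tops_upto i) = \sum_(j < N) (~~ rd j && (r j == i.+1)).
Proof.
rewrite /tops_upto filter_key_le_take ?sweep_red_arrows_sorted //.
rewrite hcells_take ?red_lengths_sweep ?count_size //.
rewrite -filter_key_le_take ?sweep_red_arrows_sorted //.
rewrite count_filter count_sweep_red_arrows crossing_balance_full.
apply: eq_bigr => j _ /=; case hr: (rd j) => //=.
rewrite (height_red (ltn_ord j) hr).
by case: (leqP (r j) i); case: ltnP; lia.
Qed.

Lemma tops_uptoS i : tops_upto i.+1 = tops_upto i ++
  nseq (\sum_(j < N) (rd j && (r j <= i.+1)) - \sum_(j < N) (rd j && (r j <= i))) i.+1.
Proof.
have /= split_filter := filter_key_le_succ i sweep_red_arrows_sorted.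
rewrite /tops_upto split_filter map_cat map_key_filter_eq; congr (_ ++ nseq _ _).
rewrite -!(count_sweep_red_arrows (fun p => p.1 <= _)) -!size_filter split_filter.
by rewrite size_cat addKn.
Qed.

Lemma tops_upto_complete i : (forall j, j < N -> rd j -> r j <= i) ->
  tops_upto i = map fst sweep_red_arrows.
Proof.
move=> H; rewrite /tops_upto; congr (map fst _); apply/all_filterP/allP => p.
by case/mapP => j; rewrite mem_filter mem_sweep_index => /andP[hr hj] ->; apply: H.
Qed.

Lemma tops_upto_stop i : K <= blues_upto i.+1 -> tops_upto i = map fst sweep_red_arrows.
Proof.
move=> hK; apply: tops_upto_complete => j hj hr; rewrite leqNgt; apply/negP => hij.
have [j' [_ hj' hb' hr']] := exists_blue_down hj (leq_ltn_trans hij (height_red_lt hj hr)).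
have : blues_upto i.+1 < K by apply/blues_upto_ltP; exists j'; rewrite hr'.
by rewrite ltnNge hK.
Qed.

(* The invariant of the bounce procedure: at step i, x_i is the number of blue
   arrows of D starting at height at most i, and the top entries assigned so
   far are the starting heights (at most i) of the red arrows of D, in sweep
   order. *)
Lemma bounce_tops_blues_upto fuel i : K <= i + fuel ->
  bounce_tops (sweep D) fuel i (blues_upto i) (tops_upto i) = map fst sweep_red_arrows.
Proof.
elim: fuel i => [|fuel IH] i hfuel /=.
  apply: tops_upto_complete => j hj hr; rewrite addn0 in hfuel.
  exact: ltnW (leq_trans (height_red_lt_count_blue hj hr) hfuel).
rewrite hcells_tops_upto -blues_uptoS sumn_red_lengths_sweep.
case: leqP => hK; first exact: tops_upto_stop.
have hi : blues_upto i < K by apply: leq_ltn_trans hK; rewrite blues_uptoS leq_addr.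
rewrite !Nb_sweep_blues_upto // -tops_uptoS.
by apply: IH; rewrite addSnnS.
Qed.

Lemma area_eq_bounce_sweep : area D = Posz (bounce (sweep D)).
Proof.
have [K0|K_gt0] := posnP K.
  suff -> : D = [::] by rewrite /area /bounce /= /hcells !big_ord0.
  apply/nilP; rewrite /nilp -leqn0 leqNgt; apply/negP => hN.
  case hr: (rd 0); first by have := height_red_lt_count_blue hN hr; rewrite K0.
  by move: K0; rewrite count_blue_sum (bigD1 (Ordinal hN)) //= hr.
have tops0 : nseq (Nb (sweep D) 0) 0 = tops_upto 0.
  rewrite -{1}blues_upto0 Nb_sweep_blues_upto ?blues_upto0 //.
  rewrite -(count_sweep_red_arrows (fun p => p.1 <= 0)) /tops_upto.
  under eq_filter do rewrite leqn0.
  by rewrite map_key_filter_eq; under eq_count do rewrite leqn0.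
rewrite /bounce sumn_red_lengths_sweep tops0 -{2}blues_upto0 bounce_tops_blues_upto //.
rewrite sumnE big_map /sweep_red_arrows big_map big_filter (perm_big _ (perm_sweep_index D)).
by rewrite big_iota0_ord /area Posz_sum; apply: eq_bigr => j _; rewrite heightE.
Qed.

End DyckPath.

Lemma sum_value D : (\sum_(s <- D) value s)%R =
  (Posz (sumn (red_lengths D)) - Posz (count (fun s => ~~ is_red s) D))%R.
Proof.
elim: D => [|s D IH]; first by rewrite big_nil.
by rewrite big_cons IH /red_lengths; case: s => [k|] /=; rewrite ?PoszD; lia.
Qed.

Lemma mem_len_red_lengths D i : i < size D -> red D i ->
  len (nth Blue D i) \in red_lengths D.
Proof.
rewrite /red_lengths; elim: D i => [|s D IH] [|i] //=.
  by case: s => //= k _ _; rewrite inE eqxx.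
by move=> hi hr; case: (is_red s); rewrite ?inE IH ?orbT.
Qed.

Section KDyckPath.
Variables (kv : seq nat) (D : seq step).
Hypothesis hD : kDyck kv D.

Lemma kDyck_rank_ge0 m : (0 <= rank D m)%R.
Proof.
case/and3P: hD => _ _ /allP hall.
case: (leqP m (size D)) => hm; first by apply: hall; rewrite mem_iota add0n ltnS.
rewrite rank_oversize; last exact: ltnW.
by apply: hall; rewrite mem_iota add0n ltnS leqnn.
Qed.

Lemma kDyck_rank_size : rank D (size D) = 0%R.
Proof.
case/and3P: hD => /eqP hlen /eqP hcount _.
by rewrite /rank take_size sum_value hlen hcount subrr.
Qed.

Lemma kDyck_len_red_gt0 : all (fun x => 0 < x) kv ->
  forall i, i < size D -> red D i -> 0 < len (nth Blue D i).
Proof.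
case/and3P: hD => /eqP hlen _ _ /allP hkv i hi hr.
by apply: hkv; rewrite -hlen mem_len_red_lengths.
Qed.

End KDyckPath.

Local Open Scope ring_scope.

Theorem theorem2p1 (k : seq nat) (Dbar : seq step) :
  all (fun x => (0 < x)%N) k ->
  in_DK k Dbar ->
  dinv Dbar = area (sweep Dbar) /\ area Dbar = (bounce (sweep Dbar))%:Z.
Proof.
move=> hk [kv [hperm hD]].
have hkv : all (fun x => (0 < x)%N) kv by rewrite -(perm_all _ hperm).
have rank_ge0 := kDyck_rank_ge0 hD.
have rank_size := kDyck_rank_size hD.
have len_red_gt0 := kDyck_len_red_gt0 hD hkv.
by split; [apply: dinv_eq_area_sweep | apply: area_eq_bounce_sweep].
Qed.
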